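(* For $n\ge0$ let $F_n(x,q;q)=\sum_{j=0}^{\lfloor n/2\rfloor}q^{j^2}\begin{bmatrix} n-j\\ j\end{bmatrix}_q x^{n-2j}$. Then for every $n\ge1$, $$\det\left(\begin{bmatrix} i+1\\ j+1\end{bmatrix}_q x^2-\begin{bmatrix} i\\ j-1\end{bmatrix}_q\right)_{i,j=0}^{n-1}=x^nF_n(x,q;q).$$
   Context: Here $q$ is an indeterminate and for integers $m\ge0$ and $j$ the $q$-binomial coefficient is $\begin{bmatrix} m\\ j\end{bmatrix}_q=\frac{(1-q^m)(1-q^{m-1})\cdots(1-q^{m-j+1})}{(1-q)(1-q^2)\cdots(1-q^j)}$ for $0\le j\le m$ and $0$ otherwise. *)

(* q is the variable of {poly rat}; x is the variable of
   {poly {poly rat}}; so an element of Q[q][x] is a polynomial in x,q. *)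
From HB Require Import structures.
From mathcomp Require Import all_boot all_order all_algebra.
Set Implicit Arguments. Unset Strict Implicit. Unset Printing Implicit Defensive.
Import GRing.Theory.
Local Open Scope ring_scope.

(* The division is exact polynomial division (the quotient is a polynomial). *)
Definition qbinom (m j : nat) : {poly rat} :=
  if (j <= m)%N then
    (\prod_(i < j) (1 - 'X^(m - i))) %/ (\prod_(i < j) (1 - 'X^(i.+1)))
  else 0.

Definition qbinomz (m : nat) (j : int) : {poly rat} :=
  match j with Posz k => qbinom m k | Negz _ => 0 end.

Definition Fn (n : nat) : {poly {poly rat}} :=
  \sum_(j < n./2.+1) (('X^(j * j) * qbinom (n - j) j)%:P * 'X^(n - 2 * j)).

From HB Require Import structures.
From mathcomp Require Import all_boot all_order all_algebra.
From mathcomp Require Import ring zify.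
Import GRing.Theory.
Local Open Scope ring_scope.

(* The matrix factors as the lower unitriangular q-Pascal matrix
   ([i choose k]_q) times the tridiagonal matrix with x^2 on the diagonal,
   q^k x^2 just below it and -1 just above it: this is the q-Pascal rule
   [i+1 choose j+1] = [i choose j] + q^(j+1) [i choose j+1].  The determinant
   D_n of the tridiagonal matrix is a continuant,
   D_(n+2) = x^2 D_(n+1) + q^(n+1) x^2 D_n, and x^n F_n satisfies the same
   recurrence because F_(n+2) = x F_(n+1) + q^(n+1) F_n, which follows termwise
   from the dual rule [m+1 choose j+1] = [m choose j+1] + q^(m-j) [m choose j]. *)

Fixpoint qbinom_rec (m j : nat) : {poly rat} :=
  match m, j with
  | _, 0 => 1
  | 0, _.+1 => 0
  | m'.+1, j'.+1 => qbinom_rec m' j' + 'X^(j'.+1) * qbinom_rec m' j'.+1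
  end.

Definition qfact (j : nat) : {poly rat} := \prod_(i < j) (1 - 'X^(i.+1)).

Definition qfalling (m j : nat) : {poly rat} := \prod_(i < j) (1 - 'X^(m - i)).

Lemma qbinom_rec_small m j : (m < j)%N -> qbinom_rec m j = 0.
Proof.
elim: m j => [|m IHm] [|j] //= ltmj.
by rewrite !IHm ?mulr0 ?addr0 // ltnW.
Qed.

Lemma qfalling_small m j : (m < j)%N -> qfalling m j = 0.
Proof. by move=> ltmj; rewrite /qfalling (bigD1 (Ordinal ltmj)) //= subnn subrr mul0r. Qed.

Lemma qfact_neq0 j : qfact j != 0.
Proof.
apply/prodf_neq0 => i _; apply: contraTneq isT => /(congr1 (horner^~ 0)).
by rewrite !hornerE expr0n subr0 => /eqP; rewrite oner_eq0.
Qed.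

Lemma qfactS j : qfact j.+1 = qfact j * (1 - 'X^(j.+1)).
Proof. by rewrite /qfact big_ord_recr. Qed.

Lemma qfallingSr m j : qfalling m j.+1 = qfalling m j * (1 - 'X^(m - j)).
Proof. by rewrite /qfalling big_ord_recr. Qed.

Lemma qfallingS m j : qfalling m.+1 j.+1 = (1 - 'X^(m.+1)) * qfalling m j.
Proof. by rewrite /qfalling big_ord_recl subn0. Qed.

Lemma qbinom_recK m j : qbinom_rec m j * qfact j = qfalling m j.
Proof.
elim: m j => [|m IHm] [|j] /=.
- by rewrite mul1r /qfact /qfalling !big_ord0.
- by rewrite mul0r qfalling_small.
- by rewrite mul1r /qfact /qfalling !big_ord0.
rewrite mulrDl -mulrA IHm qfactS mulrA IHm qfallingSr qfallingS.
have [lejm|ltmj] := leqP j m; last by rewrite qfalling_small // !(mulr0, mul0r, addr0).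
have -> : 'X^(m.+1) = 'X^(m - j) * 'X^(j.+1) :> {poly rat}.
  by rewrite -exprD; congr (_ ^+ _); lia.
ring.
Qed.

Lemma qbinomE m j : qbinom m j = qbinom_rec m j.
Proof.
rewrite /qbinom; case: leqP => [lejm|ltmj]; last by rewrite qbinom_rec_small.
by rewrite -/(qfalling m j) -/(qfact j) -qbinom_recK mulpK // qfact_neq0.
Qed.

Lemma qbinom0 m : qbinom m 0 = 1.
Proof. by rewrite qbinomE; case: m. Qed.

Lemma qbinom_small m j : (m < j)%N -> qbinom m j = 0.
Proof. by move=> ltmj; rewrite qbinomE qbinom_rec_small. Qed.

Lemma qbinomS m j : qbinom m.+1 j.+1 = qbinom m j + 'X^(j.+1) * qbinom m j.+1.
Proof. by rewrite !qbinomE. Qed.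

Lemma qbinomn m : qbinom m m = 1.
Proof. by elim: m => [|m IHm]; rewrite ?qbinom0 // qbinomS IHm qbinom_small ?mulr0 ?addr0. Qed.

Lemma qbinomS_dual m j : (j <= m)%N ->
  qbinom m.+1 j.+1 = qbinom m j.+1 + 'X^(m - j) * qbinom m j.
Proof.
move=> lejm; rewrite !qbinomE; apply: (mulIf (qfact_neq0 j.+1)).
rewrite qbinom_recK mulrDl qbinom_recK qfactS -mulrA (mulrA (qbinom_rec m j)).
rewrite qbinom_recK qfallingS qfallingSr.
have -> : 'X^(m.+1) = 'X^(m - j) * 'X^(j.+1) :> {poly rat}.
  by rewrite -exprD; congr (_ ^+ _); lia.
ring.
Qed.

Lemma qbinomz_pred m j :
  qbinomz m (j%:Z - 1) = if j is j'.+1 then qbinom m j' else 0.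
Proof. by case: j => // j; rewrite -[j.+1]addn1 PoszD addrK. Qed.

Lemma det_tridiag (R : comNzRingType) (f : nat -> nat -> R) n :
  (forall i j, (i.+1 < j)%N -> f i j = 0) ->
  (forall i j, (j.+1 < i)%N -> f i j = 0) ->
  \det (\matrix_(i < n.+2, j < n.+2) f i j) =
    f n.+1 n.+1 * \det (\matrix_(i < n.+1, j < n.+1) f i j)
    - f n.+1 n * f n n.+1 * \det (\matrix_(i < n, j < n) f i j).
Proof.
move=> f_up f_low; set A := \matrix_(i < n.+2, j < n.+2) f i j.
have sign_even k : (-1) ^+ (k + k) = 1 :> R by rewrite addnn -signr_odd odd_double.
rewrite (expand_det_row _ ord_max) !big_ord_recr /= big1 ?add0r; last first.
  by move=> j _; rewrite mxE f_low ?mul0r //= ltnS ltn_ord.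
rewrite /cofactor.
have -> : row' ord_max (col' ord_max A) = \matrix_(i < n.+1, j < n.+1) f i j.
  by apply/matrixP => i j; rewrite !mxE !lift_max.
(* the minor of the entry (n+1, n) has a single nonzero entry in its last column *)
set B := row' ord_max (col' _ A).
rewrite (expand_det_col B ord_max) big_ord_recr /= big1 ?add0r; last first.
  move=> i _; rewrite !mxE lift_max /= /bump leqnn f_up ?mul0r //.
  by rewrite add1n ltnS ltn_ord.
rewrite /cofactor.
have -> : row' ord_max (col' ord_max B) = \matrix_(i < n, j < n) f i j.
  apply/matrixP => i j; rewrite !mxE !lift_max /= /bump.
  by rewrite !(leqNgt n) !ltn_ord.
rewrite /B !mxE !lift_max /= /bump leqnn add1n addSn !sign_even exprS sign_even.
ring.
Qed.

Definition Fterm (n j : nat) : {poly {poly rat}} :=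
  ('X^(j * j) * qbinom (n - j) j)%:P * 'X^(n - 2 * j).

Lemma Fterm_small n j : (n < j + j)%N -> Fterm n j = 0.
Proof. by move=> ltnjj; rewrite /Fterm qbinom_small ?mulr0 ?mul0r //; lia. Qed.

Lemma Fn_widen n K : (n./2 < K)%N -> Fn n = \sum_(j < K) Fterm n j.
Proof.
move=> ltnK; rewrite /Fn (big_ord_widen K (Fterm n) ltnK) big_mkcond /=.
apply: eq_bigr => j _; case: ltnP => // lt_half_j.
by rewrite Fterm_small // addnn -ltn_half_double.
Qed.

Lemma FtermE j a : Fterm (j + j + a) j = ('X^(j * j) * qbinom (j + a) j)%:P * 'X^a.
Proof.
rewrite /Fterm; have -> : (j + j + a - j = j + a)%N by lia.
by have -> : (j + j + a - 2 * j = a)%N by lia.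
Qed.

Lemma FtermSS j a : Fterm (j + j + a).+2 j.+1 =
  'X * Fterm (j + j + a).+1 j.+1 + ('X^((j + j + a).+1))%:P * Fterm (j + j + a) j.
Proof.
have -> : (j + j + a).+2 = (j.+1 + j.+1 + a)%N by lia.
rewrite !FtermE (@qbinomS_dual (j + a) j (leq_addr a j)) addKn.
have -> : 'X * Fterm (j + j + a).+1 j.+1 =
          ('X^(j.+1 * j.+1) * qbinom (j + a) j.+1)%:P * 'X^a.
  case: a => [|a].
    by rewrite Fterm_small ?qbinom_small ?addn0 ?mulr0 ?mul0r //; lia.
  have -> : (j + j + a.+1).+1 = (j.+1 + j.+1 + a)%N by lia.
  by rewrite FtermE addSnnS exprS; ring.
rewrite mulrDr mulrA.
have -> : 'X^(j.+1 * j.+1) * 'X^a = 'X^((j + j + a).+1) * 'X^(j * j) :> {poly rat}.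
  by rewrite -!exprD; congr (_ ^+ _); lia.
rewrite !(polyCD, polyCM); ring.
Qed.

Lemma FnSS n : Fn n.+2 = 'X * Fn n.+1 + ('X^(n.+1))%:P * Fn n.
Proof.
rewrite (@Fn_widen n.+2 (n./2).+2) // (@Fn_widen n.+1 (n./2).+2); last first.
  by rewrite ltnS (half_leq (leqnSn n.+1)).
rewrite (@Fn_widen n (n./2).+1) // !(big_ord_recl (n./2).+1).
rewrite mulrDr !mulr_sumr -addrA -big_split /=.
congr (_ + _); first by rewrite /Fterm !subn0 !muln0 !qbinom0 exprS !mul1r.
apply: eq_bigr => -[j /= ltjn] _; rewrite /bump /= add1n.
have [a ->] : exists a, n = (j + j + a)%N.
  by exists (n - (j + j))%N; move: ltjn; rewrite ltnS geq_half_double -addnn; lia.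
exact: FtermSS.
Qed.

Definition qtri (k j : nat) : {poly {poly rat}} :=
  (if k == j then 'X^2 else 0) + (if k == j.+1 then ('X^k)%:P * 'X^2 else 0)
  - (if k.+1 == j then 1 else 0).

Lemma det_qtri n : \det (\matrix_(i < n, j < n) qtri i j) = 'X^n * Fn n.
Proof.
suff [] : \det (\matrix_(i < n, j < n) qtri i j) = 'X^n * Fn n /\
          \det (\matrix_(i < n.+1, j < n.+1) qtri i j) = 'X^(n.+1) * Fn n.+1 by [].
have Fn0 : Fn 0 = 1 by rewrite /Fn big_ord1 /= qbinom0 !mul1r.
have Fn1 : Fn 1 = 'X by rewrite /Fn big_ord1 /= qbinom0 !mul1r.
elim: n => [|n [IHn IHn1]].
  by rewrite det_mx00 det_mx11 mxE Fn0 Fn1 /qtri /= addr0 subr0 mulr1 -expr2.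
split=> //; rewrite det_tridiag; first last.
- by move=> i j ltji; rewrite /qtri !ifF ?addr0 ?subr0 //; apply/eqP; lia.
- by move=> i j ltij; rewrite /qtri !ifF ?addr0 ?subr0 //; apply/eqP; lia.
rewrite IHn IHn1 FnSS /qtri !eqxx !ifF; try by apply/eqP; lia.
by rewrite !exprS; ring.
Qed.

Lemma det_qbinom_mx n : \det (\matrix_(i < n, k < n) (qbinom i k)%:P) = 1.
Proof.
rewrite det_trig; last by apply/is_trig_mxP => i k ltik; rewrite mxE qbinom_small.
by rewrite big1 // => i _; rewrite mxE qbinomn.
Qed.

Lemma qbinom_mx_mul_qtri n :
  \matrix_(i < n, j < n) ((qbinom i.+1 j.+1)%:P * 'X^2 - (qbinomz i (j%:Z - 1))%:P)
  = \matrix_(i < n, k < n) (qbinom i k)%:P *m \matrix_(k < n, j < n) qtri k j.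
Proof.
apply/matrixP => i j; rewrite !mxE.
under eq_bigr => k _ do rewrite !mxE /qtri mulrBr mulrDr !(fun_if (GRing.mul _)) !mulr0.
rewrite sumrB big_split /= -!big_mkcond.
rewrite (big_ord1_eq _ (fun k => (qbinom i k)%:P * 'X^2)) ltn_ord.
rewrite (big_ord1_eq _ (fun k => (qbinom i k)%:P * (('X^k)%:P * 'X^2))).
have -> : (if (j.+1 < n)%N then (qbinom i j.+1)%:P * (('X^(j.+1))%:P * 'X^2) else 0)
          = (qbinom i j.+1)%:P * (('X^(j.+1))%:P * 'X^2).
  by case: ltnP => // lenj; rewrite qbinom_small ?mul0r //; apply: leq_trans lenj.
rewrite qbinomS qbinomz_pred polyCD polyCM.
case: j => -[|j] ltjn /=.
  by rewrite big_pred0 // rmorph0 subr0; ring.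
rewrite (big_ord1_eq _ (fun k => (qbinom i k)%:P * 1)) ltnW //; ring.
Qed.

Theorem proposition8 (n : nat) : (0 < n)%N ->
  \det (\matrix_(i < n, j < n)
          ((qbinom i.+1 j.+1)%:P * 'X^2 - (qbinomz i (j%:Z - 1))%:P)
        : 'M[{poly {poly rat}}]_n)
  = 'X^n * Fn n.
Proof.
move=> _.
by rewrite qbinom_mx_mul_qtri det_mulmx det_qbinom_mx mul1r det_qtri.
Qed.
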